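(* Let $\bar\Gamma$ be a finite connected graph with $k$ vertices, equipped with a groupoid representation $(\mathscr H_v, U_f)$ as described in the context, let $\mathscr H=\bigoplus_v \mathscr H_v$ and let $H$ be the associated Hamiltonian. Let $\boldsymbol\tau=(\tau,r,<)$ and $\boldsymbol\tau'=(\tau',r',<')$ be two ordered rooted spanning trees of $\bar\Gamma$, with associated matrix Hamiltonians $H_{\boldsymbol\tau}\in M_k(\mathscr A_r)$ and $H_{\boldsymbol\tau'}\in M_k(\mathscr A_{r'})$. Then there is a matrix $M\in M_k(\mathscr A_r)$ with $MM^*=M^*M=\mathrm{id}$ such that $$M H_{\boldsymbol\tau} M^* = U^{\tau}_{r r'}\, H_{\boldsymbol\tau'}\, U^{\tau}_{r' r},$$ where $U^\tau_{rr'}$ and $U^\tau_{r'r}$ act diagonally (as scalar matrices) between $\mathscr H_{r'}^k$ and $\mathscr H_r^k$. Moreover $M$ is an element of the gauge group, i.e. $M$ is the product of a diagonal matrix whose diagonal entries are unitary elements of $\mathscr A_r$ and a permutation matrix.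
   Context: $\bar\Gamma$ is a finite connected graph (multiple edges and loops allowed). Each edge has two orientations; for an oriented edge $f$ write $\bar f$ for the reversed one. A groupoid representation of $\bar\Gamma$ assigns to every vertex $v$ a separable Hilbert space $\mathscr H_v$ and to every oriented edge $f$ from $v$ to $w$ a unitary $U_f:\mathscr H_v\to\mathscr H_w$ with $U_{\bar f}=U_f^{*}$. For a walk $\gamma$ traversing oriented edges $f_1,\dots,f_m$ in this order set $U(\gamma)=U_{f_m}\cdots U_{f_1}$. The Hamiltonian is $H=\sum_{f}U_f$ on $\mathscr H=\bigoplus_v\mathscr H_v$, summed over all oriented edges (each $U_f$ viewed as a partial isometry on $\mathscr H$); thus for vertices $u,w$ its component $H_{wu}:\mathscr H_u\to\mathscr H_w$ is $\sum_{f \text{ from } u \text{ to } w}U_f$. An ordered rooted spanning tree $\boldsymbol\tau=(\tau,r,<)$ consists of a spanning tree $\tau$, a root vertex $r$, and a total order $u_1<u_2<\dots<u_k$ of all vertices with $u_1=r$. For vertices $x,y$ let $U^\tau_{yx}:=U(\gamma)$ where $\gamma$ is the unique non-backtracking path in $\tau$ from $x$ to $y$ (so $U^\tau_{yx}:\mathscr H_x\to\mathscr H_y$ and $U^\tau_{xy}=(U^\tau_{yx})^*$). $\mathscr A_r\subset B(\mathscr H_r)$ denotes the $C^*$-algebra generated by the operators $U(\gamma)$ for closed walks $\gamma$ based at $r$. The matrix Hamiltonian $H_{\boldsymbol\tau}\in M_k(\mathscr A_r)$, acting on $\mathscr H_r^k$, has entries $(H_{\boldsymbol\tau})_{ij}=U^\tau_{r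 u_i}H_{u_iu_j}U^\tau_{u_j r}$. For $\boldsymbol\tau'$ the same definitions are made with $\tau'$, root $r'$ and order $u'_1<'\dots<'u'_k$. *)

From HB Require Import structures.
From mathcomp Require Import all_boot all_order all_algebra all_fingroup.
From mathcomp Require Import reals complex.
From Stdlib Require Import ClassicalEpsilon.
Set Implicit Arguments. Unset Strict Implicit. Unset Printing Implicit Defensive.
Import Order.TTheory GRing.Theory Num.Theory.
Local Open Scope ring_scope.

Section GroupoidRep.
Variable R : realType.
Notation C := (R[i]).

Variable Hs : lmodType C.
Variable ip : Hs -> Hs -> C.

Definition sqn (x : Hs) : C := ip x x.

Definition is_inner : Prop :=
  [/\ (forall (a : C) (x y z : Hs), ip (a *: x + y) z = a * ip x z + ip y z),
      (forall x y : Hs, ip y x = (ip x y)^*),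
      (forall x : Hs, 0 <= ip x x) &
      (forall x : Hs, ip x x = 0 -> x = 0)].

Definition is_complete : Prop :=
  forall u : nat -> Hs,
    (forall eps : C, 0 < eps -> exists N : nat, forall m n : nat,
        (N <= m)%N -> (N <= n)%N -> sqn (u m - u n) < eps) ->
    exists l : Hs, forall eps : C, 0 < eps -> exists N : nat, forall n : nat,
        (N <= n)%N -> sqn (u n - l) < eps.

Definition is_separable : Prop :=
  exists d : nat -> Hs, forall (x : Hs) (eps : C), 0 < eps ->
    exists n : nat, sqn (x - d n) < eps.

Definition is_hilbert : Prop := [/\ is_inner, is_complete & is_separable].

Definition op := Hs -> Hs.

Definition is_linop (X : op) : Prop :=
  forall (a : C) (x y : Hs), X (a *: x + y) = a *: X x + X y.

Definition is_adj (X Y : op) : Prop := forall x y : Hs, ip (X x) y = ip x (Y y).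

(* operator norm of X - Y is at most sqrt eps *)
Definition opclose (X Y : op) (eps : C) : Prop :=
  forall x : Hs, sqn (X x - Y x) <= eps * sqn x.

Definition op0 : op := fun _ => 0.

(* The graph: finite vertex type V, finite type E of oriented edges,       *)
(* source/target maps and orientation reversal rv (f |-> \bar f).          *)
Variables (V E : finType) (src tgt : E -> V) (rv : E -> E).

Definition is_graph : Prop :=
  [/\ involutive rv, (forall f, rv f != f) & (forall f, src (rv f) = tgt f)].

Definition adjv : rel V := fun a b => [exists f, (src f == a) && (tgt f == b)].

Definition is_connected : Prop := forall v w : V, connect adjv v w.

Fixpoint is_walk (x y : V) (s : seq E) : bool :=
  match s with
  | [::] => x == y
  | f :: s' => (src f == x) && is_walk (tgt f) y s'
  end.

Fixpoint nonbacktracking (s : seq E) : bool :=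
  match s with
  | f :: ((g :: _) as s') => (g != rv f) && nonbacktracking s'
  | _ => true
  end.

(* Groupoid representation, realized on the (internal) direct sum          *)
(* Hs = (+)_v H_v : P v is the orthogonal projection onto H_v, and U f is  *)
(* the unitary H_(src f) -> H_(tgt f) viewed as a partial isometry on Hs.  *)
Variables (P : V -> op) (U : E -> op).

Definition is_repr : Prop :=
  [/\ (forall v, [/\ is_linop (P v), is_adj (P v) (P v) & P v \o P v =1 P v]),
      (forall v w, v != w -> forall x, P v (P w x) = 0),
      (forall x, \sum_(v : V) P v x = x) &
      (forall f, [/\ is_linop (U f), U f \o P (src f) =1 U f,
                     P (tgt f) \o U f =1 U f,
                     is_adj (U f) (U (rv f)) &
                     U (rv f) \o U f =1 P (src f)])].

(* U(gamma) = U_{f_m} ... U_{f_1} (the identity of H_x for the empty walk) *)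
Definition walkU (x : V) (s : seq E) : op := foldl (fun A f => U f \o A) (P x) s.

(* component H_{wv} : H_v -> H_w of the Hamiltonian *)
Definition Hcomp (w v : V) : op :=
  fun x => \sum_(f | (src f == v) && (tgt f == w)) U f x.

Definition is_spanning_tree (T : {set E}) : Prop :=
  [/\ (forall f, (f \in T) = (rv f \in T)),
      (forall x y, exists s, is_walk x y s && all (mem T) s) &
      (forall x s, is_walk x x s -> all (mem T) s -> nonbacktracking s -> s = [::])].

Definition tree_path (T : {set E}) (x y : V) : seq E :=
  epsilon (inhabits [::])
    (fun s => [&& is_walk x y s, all (mem T) s & nonbacktracking s]).

(* UT T x y = U^tau_{yx} : H_x -> H_y *)
Definition UT (T : {set E}) (x y : V) : op := walkU x (tree_path T x y).

(* ordered rooted spanning tree: u : 'I_k -> V enumerates u_1 < ... < u_k,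
   with u_1 = r *)
Definition is_order (r : V) (u : 'I_#|V| -> V) : Prop :=
  bijective u /\ (forall i : 'I_#|V|, val i = 0%N -> u i = r).

(* The C*-algebra A_r generated by the U(gamma), gamma closed walks at r:  *)
Inductive inA (r : V) : op -> Prop :=
| inA_gen s : is_walk r r s -> inA r (walkU r s)
| inA_add X Y : inA r X -> inA r Y -> inA r (fun x => X x + Y x)
| inA_scale (a : C) X : inA r X -> inA r (fun x => a *: X x)
| inA_mul X Y : inA r X -> inA r Y -> inA r (X \o Y)
| inA_adj X Y : inA r X -> is_adj X Y -> inA r Y
| inA_lim X : (forall eps : C, 0 < eps -> exists Y, inA r Y /\ opclose X Y eps) ->
              inA r X.

(* unitary element of A_r (unit of A_r is P r = id of H_r) *)
Definition unitary_in (r : V) (X : op) : Prop :=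
  exists Y, [/\ is_adj X Y, X \o Y =1 P r & Y \o X =1 P r].

Definition opmx := 'I_#|V| -> 'I_#|V| -> op.

Definition mxmul (A B : opmx) : opmx :=
  fun i j x => \sum_(l < #|V|) A i l (B l j x).

Definition mxid (r : V) : opmx := fun i j => if i == j then P r else op0.

Definition mxeq (A B : opmx) : Prop := forall i j x, A i j x = B i j x.

Definition Htau (T : {set E}) (r : V) (u : 'I_#|V| -> V) : opmx :=
  fun i j => UT T (u i) r \o Hcomp (u i) (u j) \o UT T r (u j).

Definition is_gauge (r : V) (M : opmx) : Prop :=
  exists (d : 'I_#|V| -> op) (s : {perm 'I_#|V|}),
    (forall i, inA r (d i) /\ unitary_in r (d i)) /\
    (forall i j x, M i j x = (if i == s j then d i else op0) x).

End GroupoidRep.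

(* Transport along a spanning tree is path independent: a walk inside the tree
   reduces to the tree path by cancelling backtracks, and U(\bar f) U(f) = id.
   So for each i the closed walk gamma_i at r that runs to u'_i in tau, on to r'
   in tau' and back to r in tau gives a unitary U(gamma_i) in A_r with
     U(gamma_i) U^tau_{r u'_i} = U^tau_{r r'} U^tau'_{r' u'_i}.
   If s is the permutation with u_(s^-1 i) = u'_i and M is the gauge matrix with
   entry U(gamma_i) at (i, s^-1 i), the (i, j) entry of M H_tau M^* is
   U(gamma_i) U^tau_{r u'_i} H_{u'_i u'_j} U^tau_{u'_j r} U(gamma_j)^*, which is
   the claimed entry by the identity above and its adjoint. *)

From HB Require Import structures.
From mathcomp Require Import all_boot all_order all_algebra all_fingroup.
From mathcomp Require Import reals complex.
From Stdlib Require Import ClassicalEpsilon FunctionalExtensionality.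

Set Implicit Arguments.
Unset Strict Implicit.

Import Order.TTheory GRing.Theory Num.Theory.
Local Open Scope ring_scope.

Lemma linop0 (R : realType) (Hs : lmodType R[i]) (X : op Hs) : is_linop X -> X 0 = 0.
Proof.
move=> linX; have := linX 1 0 0; rewrite !scale1r addr0 => X0.
by apply: (addrI (X 0)); rewrite addr0 -X0.
Qed.

Lemma is_adj_op0 (R : realType) (Hs : lmodType R[i]) (ip : Hs -> Hs -> R[i]) :
  is_inner ip -> is_adj ip (@op0 R Hs) (@op0 R Hs).
Proof.
case=> ip_linear ip_conj _ _; have ip0 z : ip 0 z = 0.
  have := ip_linear 1 0 0 z; rewrite scale1r addr0 mul1r => ip0_twice.
  by apply: (addrI (ip 0 z)); rewrite addr0 -ip0_twice.
by move=> x y; rewrite /op0 ip0 ip_conj ip0 conjC0.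
Qed.

Lemma inA_op0 (R : realType) (Hs : lmodType R[i]) (ip : Hs -> Hs -> R[i])
    (V E : finType) (src tgt : E -> V) (P : V -> op Hs) (U : E -> op Hs) (r : V) :
  inA ip src tgt P U r (@op0 R Hs).
Proof.
have -> : @op0 R Hs = (fun x => 0 *: walkU P U r [::] x).
  by apply: functional_extensionality => x; rewrite scale0r.
by apply/inA_scale/inA_gen => /=.
Qed.

Lemma perm_relabel {T : finType} {n} {u u' : 'I_n -> T} :
  injective u -> bijective u' -> exists s : {perm 'I_n}, forall i, u ((s^-1)%g i) = u' i.
Proof.
move=> inj_u [g _ gK]; have inj_gu : injective (g \o u).
  by move=> a b /(can_inj gK) /inj_u.
by exists (perm inj_gu) => i; rewrite -[in RHS](permKV (perm inj_gu) i) permE /= gK.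
Qed.

Section Walks.
Variables (V E : finType) (src tgt : E -> V) (rv : E -> E).
Hypothesis graphE : is_graph src tgt rv.

Local Notation walk := (is_walk src tgt).

Let rvK : involutive rv. Proof. by case: graphE. Qed.
Let src_rv f : src (rv f) = tgt f. Proof. by case: graphE. Qed.
Let tgt_rv f : tgt (rv f) = src f. Proof. by rewrite -{2}(rvK f) src_rv. Qed.

Lemma is_walk_cat x y s1 s2 :
  walk x y (s1 ++ s2) <-> exists z, walk x z s1 && walk z y s2.
Proof.
elim: s1 x => [|f s1 IH] x /=.
  by split=> [w|[z /andP [/eqP -> //]]]; exists x; rewrite eqxx.
split=> [/andP [srcf /IH [z /andP [w1 w2]]]|[z /andP [/andP [srcf w1] w2]]].
  by exists z; rewrite srcf w1.
by rewrite srcf; apply/IH; exists z; rewrite w1.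
Qed.

Lemma is_walk_backtrack {x y s1 f s2} :
  walk x y (s1 ++ f :: rv f :: s2) -> walk x y (s1 ++ s2).
Proof.
case/is_walk_cat => z /andP [walk_s1 /= /and3P [/eqP srcf _ walk_s2]].
by apply/is_walk_cat; exists z; rewrite walk_s1 -srcf -tgt_rv.
Qed.

Lemma backtrackingP s : ~~ nonbacktracking rv s ->
  exists s1 f s2, s = s1 ++ f :: rv f :: s2.
Proof.
elim: s => [|f [|g s] IH] //=; case: (eqVneq g (rv f)) => [-> _|_ /= /IH].
  by exists [::], f, s.
by case=> s1 [h [s2 ->]]; exists (f :: s1), h, s2.
Qed.

Lemma nonbacktracking_ind (Q : seq E -> Prop) x y :
    (forall t, walk x y t -> nonbacktracking rv t -> Q t) ->
    (forall s1 f s2, walk x y (s1 ++ f :: rv f :: s2) ->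
       Q (s1 ++ s2) -> Q (s1 ++ f :: rv f :: s2)) ->
  forall s, walk x y s -> Q s.
Proof.
move=> Q_nb Q_bt s; have [n] := ubnP (size s); elim: n s => // n IH s.
have [nb_s _ walk_s|/backtrackingP [s1 [f [s2 ->]]]] := boolP (nonbacktracking rv s).
  exact: Q_nb.
rewrite size_cat /= !addnS !ltnS => size_s walk_s; apply: Q_bt (walk_s) _.
by apply: IH (is_walk_backtrack walk_s); rewrite size_cat ltnW.
Qed.

Definition rev_walk (s : seq E) : seq E := rev (map rv s).

Lemma rev_walk_cons f s : rev_walk (f :: s) = rev_walk s ++ [:: rv f].
Proof. by rewrite /rev_walk /= rev_cons cats1. Qed.

Lemma rev_walk_rcons s f : rev_walk (rcons s f) = rv f :: rev_walk s.
Proof. by rewrite /rev_walk map_rcons rev_rcons. Qed.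

Lemma rev_walkK : involutive rev_walk.
Proof. by move=> s; rewrite /rev_walk map_rev revK (mapK rvK). Qed.

Lemma rev_walk_cat s1 s2 : rev_walk (s1 ++ s2) = rev_walk s2 ++ rev_walk s1.
Proof. by rewrite /rev_walk map_cat rev_cat. Qed.

Lemma is_walk_rev {x y s} : walk x y s -> walk y x (rev_walk s).
Proof.
elim: s x => [|f s IH] x /=; first by move/eqP->.
case/andP => /eqP srcf walk_s; rewrite rev_walk_cons; apply/is_walk_cat.
by exists (tgt f); rewrite IH //= src_rv tgt_rv srcf !eqxx.
Qed.

Section SpanningTree.
Context {T : {set E}} (treeT : is_spanning_tree src tgt rv T).

Lemma all_rev_walk {s} : all (mem T) s -> all (mem T) (rev_walk s).
Proof.
case: treeT => rvT _ _; rewrite all_rev all_map.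
by apply: sub_all => f /=; rewrite -rvT.
Qed.

Lemma tree_path_spec x y : let p := tree_path src tgt rv T x y in
  [&& walk x y p, all (mem T) p & nonbacktracking rv p].
Proof.
apply: (epsilon_spec _ (fun p => [&& walk x y p, all (mem T) p & nonbacktracking rv p])).
case: treeT => _ /(_ x y) [s /andP [walk_s T_s]] _; move: s walk_s T_s.
apply: nonbacktracking_ind => [t walk_t nb_t T_t|s1 f s2 _ IH].
  by exists t; rewrite walk_t T_t.
by rewrite !all_cat /= => /and3P [T_s1 _ /andP [_ T_s2]]; apply: IH; rewrite all_cat T_s1.
Qed.

Lemma is_walk_tree_path x y : walk x y (tree_path src tgt rv T x y).
Proof. by case/and3P: (tree_path_spec x y). Qed.

Lemma all_tree_path x y : all (mem T) (tree_path src tgt rv T x y).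
Proof. by case/and3P: (tree_path_spec x y). Qed.

End SpanningTree.

Definition gauge_loop (T T' : {set E}) (r r' v : V) : seq E :=
  tree_path src tgt rv T r v ++ tree_path src tgt rv T' v r' ++ tree_path src tgt rv T r' r.

Lemma is_walk_gauge_loop T T' r r' v :
    is_spanning_tree src tgt rv T -> is_spanning_tree src tgt rv T' ->
  walk r r (gauge_loop T T' r r' v).
Proof.
move=> treeT treeT'; apply/is_walk_cat; exists v; rewrite is_walk_tree_path //=.
by apply/is_walk_cat; exists r'; rewrite !is_walk_tree_path.
Qed.

Section Operators.
Variables (R : realType) (Hs : lmodType R[i]) (ip : Hs -> Hs -> R[i]).
Variables (P : V -> op Hs) (U : E -> op Hs).
Hypothesis reprE : is_repr ip src tgt rv P U.

Local Notation UW := (walkU P U).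

Let P_linop v : is_linop (P v). Proof. by case: reprE => /(_ v) []. Qed.
Let P_idem v x : P v (P v x) = P v x.
Proof. by case: reprE => /(_ v) [_ _ idem] _ _ _; apply: idem. Qed.
Let P_adj v : is_adj ip (P v) (P v). Proof. by case: reprE => /(_ v) []. Qed.
Let U_linop f : is_linop (U f). Proof. by case: reprE => _ _ _ /(_ f) []. Qed.
Let U_src f x : U f (P (src f) x) = U f x.
Proof. by case: reprE => _ _ _ /(_ f) [_ h _ _ _]; apply: h. Qed.
Let P_tgt f x : P (tgt f) (U f x) = U f x.
Proof. by case: reprE => _ _ _ /(_ f) [_ _ h _ _]; apply: h. Qed.
Let U_adj f : is_adj ip (U f) (U (rv f)). Proof. by case: reprE => _ _ _ /(_ f) []. Qed.
Let U_rvK f x : U (rv f) (U f x) = P (src f) x.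
Proof. by case: reprE => _ _ _ /(_ f) [_ _ _ _ h]; apply: h. Qed.

Definition push_walk (A : op Hs) (s : seq E) : op Hs :=
  foldl (fun B f => U f \o B) A s.

Lemma push_walk_ext A B s : A =1 B -> push_walk A s =1 push_walk B s.
Proof. by elim: s A B => [|f s IH] A B eqAB //=; apply: IH => x /=; rewrite eqAB. Qed.

Lemma push_walk_comp A B s x : push_walk (A \o B) s x = push_walk A s (B x).
Proof.
by elim: s A => [|f s IH] A //=; apply: (IH (U f \o A)).
Qed.

Lemma push_walk_cat A s1 s2 : push_walk A (s1 ++ s2) = push_walk (push_walk A s1) s2.
Proof. exact: foldl_cat. Qed.

Lemma push_walk0 A s : A 0 = 0 -> push_walk A s 0 = 0.
Proof. by elim: s A => [|f s IH] A A0 //=; apply: IH => /=; rewrite A0 linop0. Qed.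

Lemma walkU0 x s : UW x s 0 = 0.
Proof. exact/push_walk0/linop0. Qed.

Lemma walkU_cons x f s : src f = x -> UW x (f :: s) =1 UW (tgt f) s \o U f.
Proof.
move=> <- y; rewrite /= /walkU /= -!/(push_walk _ _) -push_walk_comp.
by apply: push_walk_ext => z /=; rewrite U_src P_tgt.
Qed.

Lemma walkU_end {x y s} : walk x y s -> forall z, P y (UW x s z) = UW x s z.
Proof.
elim: s x => [|f s IH] x /=; first by move=> /eqP -> z; rewrite P_idem.
by case/andP => /eqP srcf walk_s z; rewrite !walkU_cons //= IH.
Qed.

Lemma walkU_start x s z : UW x s (P x z) = UW x s z.
Proof.
rewrite /walkU -/(push_walk _ _) -push_walk_comp.
by apply: push_walk_ext => y /=; rewrite P_idem.
Qed.

Lemma walkU_cat {x y s1 s2} : walk x y s1 -> UW x (s1 ++ s2) =1 UW y s2 \o UW x s1.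
Proof.
move=> walk_s1 z; rewrite /= /walkU -!/(push_walk _ _) push_walk_cat -push_walk_comp.
by apply: push_walk_ext => w /=; rewrite walkU_end.
Qed.

Lemma walkU_backtrack {x y s1 f s2} : walk x y (s1 ++ f :: rv f :: s2) ->
  UW x (s1 ++ f :: rv f :: s2) =1 UW x (s1 ++ s2).
Proof.
case/is_walk_cat => z /andP [walk_s1 /= /andP [/eqP srcf _]] w.
rewrite /walkU -!/(push_walk _ _) !push_walk_cat /=.
by apply: push_walk_ext => v /=; rewrite U_rvK srcf walkU_end.
Qed.

Lemma walkU_cat_rev {x y s} : walk x y s -> UW x (s ++ rev_walk s) =1 P x.
Proof.
elim/last_ind: s y => [|s f IH] y walk_sf z //.
have def_s : rcons s f ++ rev_walk (rcons s f) = s ++ f :: rv f :: rev_walk s.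
  by rewrite rev_walk_rcons cat_rcons.
have walk_bt : walk x x (s ++ f :: rv f :: rev_walk s).
  by rewrite -def_s; apply/is_walk_cat; exists y; rewrite walk_sf is_walk_rev.
rewrite def_s (walkU_backtrack walk_bt).
move: walk_sf; rewrite -cats1 => /is_walk_cat [w /andP [walk_s _]].
exact: IH walk_s z.
Qed.

Lemma walkU_rev_cat {x y s} : walk x y s -> UW y (rev_walk s ++ s) =1 P y.
Proof. by move/is_walk_rev/walkU_cat_rev; rewrite rev_walkK. Qed.

Lemma walkU_revK {x y s} : walk x y s -> forall z, UW y (rev_walk s) (UW x s z) = P x z.
Proof. by move=> walk_s z; rewrite -(walkU_cat_rev walk_s) (walkU_cat walk_s). Qed.

Lemma walkU_revKV {x y s} : walk x y s -> forall z, UW x s (UW y (rev_walk s) z) = P y z.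
Proof. by move=> walk_s z; rewrite -(walkU_rev_cat walk_s) (walkU_cat (is_walk_rev walk_s)). Qed.

Lemma walkU_adj {x y s} : walk x y s -> is_adj ip (UW x s) (UW y (rev_walk s)).
Proof.
elim: s x => [|f s IH] x /=; first by move/eqP->; apply: P_adj.
case/andP => /eqP srcf walk_s v w.
rewrite walkU_cons // rev_walk_cons (walkU_cat (is_walk_rev walk_s)) /=.
by rewrite (IH _ walk_s) U_adj /walkU /= -src_rv U_src.
Qed.

Lemma walkU_unitary {x y s} : walk x y s ->
  [/\ is_adj ip (UW x s) (UW y (rev_walk s)),
       UW x s \o UW y (rev_walk s) =1 P y & UW y (rev_walk s) \o UW x s =1 P x].
Proof. by move=> walk_s; split; [exact: walkU_adj | exact: walkU_revKV | exact: walkU_revK]. Qed.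

Lemma Htau0 T r u i j : Htau src tgt rv P U T r u i j 0 = 0.
Proof. by rewrite /Htau /UT /= walkU0 /Hcomp big1 ?walkU0 // => f _; rewrite linop0. Qed.

Section TreeOperators.
Context {T : {set E}} (treeT : is_spanning_tree src tgt rv T).

Local Notation UTT := (UT src tgt rv P U T).

Lemma walkU_tree_closed {x s} : walk x x s -> all (mem T) s -> UW x s =1 P x.
Proof.
move: s; apply: nonbacktracking_ind => [t walk_t nb_t T_t|s1 f s2 walk_bt IH].
  by case: treeT => _ _ /(_ x t walk_t T_t nb_t) ->.
rewrite !all_cat /= => /and3P [T_s1 _ /andP [_ T_s2]] z.
by rewrite (walkU_backtrack walk_bt) IH // all_cat T_s1.
Qed.

Lemma walkU_tree {x y s} : walk x y s -> all (mem T) s -> UW x s =1 UTT x y.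
Proof.
move=> walk_s T_s z; set p := tree_path src tgt rv T x y.
have walk_p : walk x y p := is_walk_tree_path treeT x y.
have loop : walk x x (s ++ rev_walk p).
  by apply/is_walk_cat; exists y; rewrite walk_s is_walk_rev.
have T_loop : all (mem T) (s ++ rev_walk p).
  by rewrite all_cat T_s (all_rev_walk treeT (all_tree_path treeT x y)).
transitivity (UW x ((s ++ rev_walk p) ++ p) z).
  by rewrite -catA (walkU_cat walk_s) /= (walkU_rev_cat walk_p) walkU_end.
by rewrite (walkU_cat loop) /= (walkU_tree_closed loop T_loop) walkU_start.
Qed.

Lemma UT_K x y z : UTT y x (UTT x y z) = P x z.
Proof.
have walk_p := is_walk_tree_path treeT x y.
rewrite -(walkU_tree (is_walk_rev walk_p)) ?(all_rev_walk treeT (all_tree_path treeT x y)) //.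
exact: walkU_revK walk_p z.
Qed.

End TreeOperators.

Section GaugeLoop.
Variables (T T' : {set E}) (r r' : V).
Hypotheses (treeT : is_spanning_tree src tgt rv T) (treeT' : is_spanning_tree src tgt rv T').

Local Notation UTT := (UT src tgt rv P U T).
Local Notation UTT' := (UT src tgt rv P U T').

Lemma walkU_gauge_loop v z :
  UW r (gauge_loop T T' r r' v) (UTT v r z) = UTT r' r (UTT' v r' z).
Proof.
rewrite (walkU_cat (is_walk_tree_path treeT r v)) /=.
rewrite (walkU_cat (is_walk_tree_path treeT' v r')) /=.
by rewrite -/(UTT r v _) UT_K // walkU_start.
Qed.

Lemma UT_walkU_rev_gauge_loop v z :
  UTT r v (UW r (rev_walk (gauge_loop T T' r r' v)) z) = UTT' r' v (UTT r r' z).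
Proof.
have walk_p2 := is_walk_rev (is_walk_tree_path treeT' v r').
have walk_p3 := is_walk_rev (is_walk_tree_path treeT r' r).
have UW_p1 := walkU_tree treeT (is_walk_rev (is_walk_tree_path treeT r v))
  (all_rev_walk treeT (all_tree_path treeT r v)).
have UW_p2 := walkU_tree treeT' walk_p2 (all_rev_walk treeT' (all_tree_path treeT' v r')).
have UW_p3 := walkU_tree treeT walk_p3 (all_rev_walk treeT (all_tree_path treeT r' r)).
rewrite /gauge_loop !rev_walk_cat -catA (walkU_cat walk_p3) /= (walkU_cat walk_p2) /=.
by rewrite UW_p1 UW_p2 UW_p3 UT_K // walkU_end // is_walk_tree_path.
Qed.

End GaugeLoop.

End Operators.

End Walks.

Section PermDiagMatrix.
Variables (R : realType) (Hs : lmodType R[i]) (V : finType).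
Variables (P : V -> op Hs) (r : V).

Definition perm_diag_mx (s : {perm 'I_#|V|}) (d : 'I_#|V| -> op Hs) : opmx Hs V :=
  fun i j => if i == s j then d i else @op0 R Hs.

Definition perm_diag_adjmx (s : {perm 'I_#|V|}) (e : 'I_#|V| -> op Hs) : opmx Hs V :=
  fun i j => if j == s i then e j else @op0 R Hs.

Lemma eq_perm_invr (s : {perm 'I_#|V|}) i l : (i == s l) = (l == (s^-1)%g i).
Proof. by apply/eqP/eqP => [->|->]; rewrite ?permK ?permKV. Qed.

Lemma mxmul_perm_diag_adjmx s d e :
    (forall i, d i 0 = 0) -> (forall i x, d i (e i x) = P r x) ->
  mxeq (mxmul (perm_diag_mx s d) (perm_diag_adjmx s e)) (mxid P r).
Proof.
move=> d0 de i j x; rewrite /mxmul (big_only1 (s^-1 i)%g) // => [|l /negbTE l_i _].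
  by rewrite /perm_diag_mx /perm_diag_adjmx permKV eqxx /mxid eq_sym; case: eqP => [->|].
by rewrite /perm_diag_mx eq_perm_invr l_i.
Qed.

Lemma mxmul_perm_diag_adjmx_mx s d e :
    (forall i, e i 0 = 0) -> (forall i x, e i (d i x) = P r x) ->
  mxeq (mxmul (perm_diag_adjmx s e) (perm_diag_mx s d)) (mxid P r).
Proof.
move=> e0 ed i j x; rewrite /mxmul (big_only1 (s i)) // => [|l /negbTE l_i _].
  by rewrite /perm_diag_mx /perm_diag_adjmx eqxx /mxid (inj_eq perm_inj); case: eqP => [->|].
by rewrite /perm_diag_adjmx l_i.
Qed.

Lemma perm_diag_conj s d e (A : opmx Hs V) :
    (forall i, d i 0 = 0) -> (forall i j, A i j 0 = 0) ->
  mxeq (mxmul (mxmul (perm_diag_mx s d) A) (perm_diag_adjmx s e))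
       (fun i j x => d i (A ((s^-1)%g i) ((s^-1)%g j) (e j x))).
Proof.
have only_inv k (F : 'I_#|V| -> Hs) :
    (forall l, l != (s^-1 k)%g -> F l = 0) -> \sum_l F l = F (s^-1 k)%g.
  by move=> F0; rewrite (big_only1 (s^-1 k)%g) // => l /F0.
move=> d0 A0 i j x; rewrite /mxmul (only_inv j) => [|l /negbTE l_j].
  by rewrite (only_inv i) /perm_diag_mx /perm_diag_adjmx !permKV !eqxx // => l /negbTE l_i;
     rewrite eq_perm_invr l_i.
rewrite /perm_diag_adjmx eq_perm_invr l_j big1 // => m _.
by rewrite A0 /perm_diag_mx; case: ifP.
Qed.

Lemma is_adj_perm_diag_mx (ip : Hs -> Hs -> R[i]) s d e :
    is_inner ip -> (forall i, is_adj ip (d i) (e i)) ->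
  forall i j, is_adj ip (perm_diag_mx s d j i) (perm_diag_adjmx s e i j).
Proof.
move=> inner adj_de i j; rewrite /perm_diag_mx /perm_diag_adjmx; case: ifP => // _.
exact: is_adj_op0.
Qed.

End PermDiagMatrix.

Theorem mainTheorem1 (R : realType) (Hs : lmodType R[i]) (ip : Hs -> Hs -> R[i])
    (V E : finType) (src tgt : E -> V) (rv : E -> E)
    (P : V -> op Hs) (U : E -> op Hs) :
  is_hilbert ip ->
  is_graph src tgt rv ->
  is_connected src tgt ->
  is_repr ip src tgt rv P U ->
  forall (T : {set E}) (r : V) (u : 'I_#|V| -> V)
         (T' : {set E}) (r' : V) (u' : 'I_#|V| -> V),
  is_spanning_tree src tgt rv T -> is_order r u ->
  is_spanning_tree src tgt rv T' -> is_order r' u' ->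
  exists M Ms : opmx Hs V,
    [/\ (forall i j, inA ip src tgt P U r (M i j)) /\
          (forall i j, is_adj ip (M j i) (Ms i j)),
        mxeq (mxmul M Ms) (mxid P r),
        mxeq (mxmul Ms M) (mxid P r),
        mxeq (mxmul (mxmul M (Htau src tgt rv P U T r u)) Ms)
             (fun i j => UT src tgt rv P U T r' r \o Htau src tgt rv P U T' r' u' i j
                         \o UT src tgt rv P U T r r')
      & is_gauge ip src tgt P U r M].
Proof.
move=> [inner _ _] graphE _ reprE T r u T' r' u' treeT [bij_u _] treeT' [bij_u' _].
have [s relabel] := perm_relabel (bij_inj bij_u) bij_u'.
pose loop i := gauge_loop src tgt rv T T' r r' (u' i).
have walk_loop i : is_walk src tgt r r (loop i) := is_walk_gauge_loop graphE r r' (u' i) treeT treeT'.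
pose d i := walkU P U r (loop i); pose e i := walkU P U r (rev_walk rv (loop i)).
have d0 i : d i 0 = 0 := walkU0 reprE r (loop i).
have unitary_d i := walkU_unitary graphE reprE (walk_loop i).
exists (perm_diag_mx s d), (perm_diag_adjmx s e); split.
- split=> i j; last by apply: is_adj_perm_diag_mx => // k; case: (unitary_d k).
  by rewrite /perm_diag_mx; case: ifP => _; [exact: inA_gen | apply: inA_op0].
- by apply: mxmul_perm_diag_adjmx => // i; case: (unitary_d i).
- apply: mxmul_perm_diag_adjmx_mx => i; first exact: walkU0 reprE r _.
  by case: (unitary_d i).
- move=> i j x; rewrite perm_diag_conj //; last exact: Htau0 reprE T r u.
  rewrite /Htau /d /= !relabel (UT_walkU_rev_gauge_loop graphE reprE) //.
  by rewrite (walkU_gauge_loop graphE reprE).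
- exists d, s; split => // i; split; first exact: inA_gen.
  by exists (e i); case: (unitary_d i).
Qed.
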